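(* Let $\mathcal T$ be a transducer with $n\ge1$ states. If $\mathcal T$ is zero-avoiding with minimum bound $k$, then $k<n$.
   Context: A transducer is a quintuple $\mathcal T=(Q,\Sigma,E,I,F)$ with finite state set $Q$, finite alphabet $\Sigma$, finite transition set $E\subseteq Q\times\{x/y : x,y\in\Sigma\cup\{\lambda\}\}\times Q$ ($\lambda$ the empty word), nonempty initial set $I\subseteq Q$, final set $F\subseteq Q$. A path is a finite sequence of consecutive transitions; its label $x_1\cdots x_\ell/y_1\cdots y_\ell$ is formed by concatenating input parts and output parts. A computation is a path that is empty or starts at an initial state. For a path $P$ with label $u/v$, the length discrepancy is $d(P)=|u|-|v|$, and $d_{max}(P)=\max\{|d(Q)| : Q\text{ a prefix of }P\}$ (prefixes being initial segments of transitions, including the empty path). $\mathcal T$ is zero-avoiding with bound $k\in\mathbb N_0$ if for every computation $P$ of $\mathcal T$, $d_{max}(P)>k$ implies $d(P)\neq 0$. It is zero-avoiding with minimum bound $k$ if it is zero-avoiding with bound $k$ but not with bound $k-1$. *)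

From HB Require Import structures.
From mathcomp Require Import all_boot all_order all_algebra.
Set Implicit Arguments. Unset Strict Implicit. Unset Printing Implicit Defensive.
Import Order.TTheory GRing.Theory Num.Theory.

(* A label x/y with x,y in S ∪ {λ} is encoded as (x, y) : option S * option S,
   with None standing for the empty word λ. *)
Definition transition (Q S : finType) := (Q * (option S * option S) * Q)%type.

Record transducer (Q S : finType) := Transducer {
  trans : {set transition Q S};
  init  : {set Q};
  final : {set Q}
}.

Section Paths.
Variables (Q S : finType) (T : transducer Q S).

Definition src (e : transition Q S) : Q := e.1.1.
Definition tgt (e : transition Q S) : Q := e.2.
Definition lbl_in (e : transition Q S) : option S := e.1.2.1.
Definition lbl_out (e : transition Q S) : option S := e.1.2.2.

Definition is_path (p : seq (transition Q S)) : bool :=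
  all (fun e => e \in trans T) p && sorted (fun e1 e2 => tgt e1 == src e2) p.

Definition is_computation (p : seq (transition Q S)) : bool :=
  is_path p && (if p is e :: _ then src e \in init T else true).

Definition disc (p : seq (transition Q S)) : int :=
  (\sum_(e <- p) ((lbl_in e != None)%:Z - (lbl_out e != None)%:Z))%R.

Definition dmax (p : seq (transition Q S)) : nat :=
  \max_(i < (size p).+1) `|disc (take i p)|%N.

(* zero-avoiding with bound k (k an integer, so that "bound k-1" makes sense for k = 0) *)
Definition zero_avoiding (k : int) : Prop :=
  forall p, is_computation p -> (k < (dmax p)%:Z)%R -> disc p != 0%R.

Definition zero_avoiding_min (k : nat) : Prop :=
  zero_avoiding k%:Z /\ ~ zero_avoiding (k%:Z - 1)%R.

End Paths.

From mathcomp Require Import all_boot all_order all_algebra zify.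
Import Order.TTheory GRing.Theory Num.Theory.
Set Implicit Arguments. Unset Strict Implicit. Unset Printing Implicit Defensive.

(* Suppose the minimum bound k satisfies k >= n = #|Q|.  Since T is
   not zero-avoiding with bound k-1, some computation P has d(P) = 0 and
   d_max(P) >= k, so some prefix P[0..m) has |d| >= n.  The prefix discrepancies
   change by at most 1 per transition, so on the way from 0 up to |d(P[0..m))|
   the first visits to the n+1 levels 0, ..., n happen at n+1 increasing
   positions; two of them sit at the same state, which yields a loop L1 inside
   P[0..m) whose discrepancy has the sign of d(P[0..m)).  Reading P backwards
   from its end (where d = 0 again) gives a loop L2 after position m with
   discrepancy of the opposite sign.  Repeating L1 an extra |d(L2)| times and
   L2 an extra |d(L1)| times gives a computation P' with d(P') = 0 whose prefix
   up to (the image of) m has discrepancy strictly larger in absolute value, so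
   d_max(P') > d_max(P) >= k: T is not zero-avoiding with bound k either. *)

Section Segments.
Variable A : Type.
Implicit Types (p : seq A) (a b i j r : nat).

Definition seg i j p : seq A := drop i (take j p).

Definition pump p a b r : seq A :=
  take b p ++ flatten (nseq r (seg a b p)) ++ drop b p.

Lemma take_cat_seg i j p : i <= j -> take i p ++ seg i j p = take j p.
Proof. by move=> hij; rewrite -{1}(take_takel p hij) cat_take_drop. Qed.

Lemma seg_cat_drop i j p : i <= j -> seg i j p ++ drop j p = drop i p.
Proof.
move=> hij; rewrite /seg -{1}(subnK hij) -take_drop.
by rewrite -{2}(subnK hij) -drop_drop cat_take_drop.
Qed.

Lemma seg_take a b j p : b <= j -> seg a b (take j p) = seg a b p.
Proof. by move=> hbj; rewrite /seg take_takel. Qed.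

Lemma take_pump a b r j p : j <= b <= size p -> take j (pump p a b r) = take j p.
Proof.
case/andP=> hjb hb; rewrite takel_cat ?take_takel //.
by rewrite size_takel.
Qed.

Lemma pump_take a b r j p : b <= j -> pump p a b r = pump (take j p) a b r ++ drop j p.
Proof.
by move=> hbj; rewrite /pump seg_take // take_takel // -!catA seg_cat_drop.
Qed.
End Segments.

Section Walks.
Variables (Q S : finType) (T : transducer Q S).

Fixpoint walk (q : Q) (p : seq (transition Q S)) : bool :=
  if p is e :: p' then [&& e \in trans T, src e == q & walk (tgt e) p'] else true.

Definition end_state (q : Q) (p : seq (transition Q S)) : Q := last q (map (@tgt Q S) p).

Definition state_at (q : Q) (p : seq (transition Q S)) (i : nat) : Q :=
  end_state q (take i p).

Lemma walk_cons q e p : walk q (e :: p) = (src e == q) && is_path T (e :: p).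
Proof.
elim: p q e => [|e' p IH] q e; first by rewrite /is_path /= !andbT andbC.
have /= -> := IH (tgt e) e'; rewrite /is_path /= [src e' == _]eq_sym.
by case: (e \in trans T); case: (src e == q); case: (tgt e == src e');
  case: (e' \in trans T); rewrite /= ?andbF.
Qed.

(* Computations are the walks starting at an initial state (the empty one
   needs some initial state). *)
Lemma computation_walk p :
  init T != set0 -> is_computation T p -> exists2 q, q \in init T & walk q p.
Proof.
move=> /set0Pn [q0 hq0]; case: p => [|e p]; first by exists q0.
by case/andP=> hp he; exists (src e); rewrite // walk_cons eqxx.
Qed.

Lemma walk_computation q p : q \in init T -> walk q p -> is_computation T p.
Proof.
case: p => [|e p] hq; first by [].
by rewrite walk_cons => /andP [/eqP he hp]; rewrite /is_computation hp he.
Qed.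

Lemma end_state_cat q p1 p2 :
  end_state q (p1 ++ p2) = end_state (end_state q p1) p2.
Proof. by rewrite /end_state map_cat last_cat. Qed.

Lemma walk_cat q p1 p2 :
  walk q (p1 ++ p2) = walk q p1 && walk (end_state q p1) p2.
Proof. by elim: p1 q => [|e p1 IH] q //=; rewrite IH !andbA. Qed.

Lemma walk_seg q p i j :
  walk q p -> i <= j ->
  walk (state_at q p i) (seg i j p) /\
  end_state (state_at q p i) (seg i j p) = state_at q p j.
Proof.
move=> hp hij; split; last by rewrite /state_at -(take_cat_seg p hij) end_state_cat.
move: hp; rewrite -{1}(cat_take_drop j p) -(take_cat_seg p hij) -catA !walk_cat.
by case/and3P.
Qed.

Lemma walk_iter q L r :
  walk q L -> end_state q L = q ->
  walk q (flatten (nseq r L)) /\ end_state q (flatten (nseq r L)) = q.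
Proof.
move=> hL hq; elim: r => [|r [IHw IHe]] //=.
by rewrite walk_cat end_state_cat hq hL IHw IHe.
Qed.

Lemma walk_pump q p a b r :
  walk q p -> a <= b -> state_at q p a = state_at q p b -> walk q (pump p a b r).
Proof.
move=> hp hab hst; have [hL hLe] := walk_seg hp hab.
rewrite hst in hL hLe; have [hLr hLre] := walk_iter r hL hLe.
move: hp; rewrite /pump -{1}(cat_take_drop b p) !walk_cat.
by rewrite -/(state_at q p b) hLre hLr => /andP [-> ->].
Qed.
End Walks.

Section Discrepancy.
Variables Q S : finType.
Implicit Types (p L : seq (transition Q S)).
Local Open Scope ring_scope.

Lemma disc_nil : disc ([::] : seq (transition Q S)) = 0.
Proof. by rewrite /disc big_nil. Qed.

Lemma disc_cat p1 p2 : disc (p1 ++ p2) = disc p1 + disc p2.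
Proof. by rewrite /disc big_cat. Qed.

Lemma disc_iter L r : disc (flatten (nseq r L)) = r%:Z * disc L.
Proof.
elim: r => [|r IH] /=; first by rewrite disc_nil mul0r.
by rewrite disc_cat IH -addn1 PoszD mulrDl mul1r addrC.
Qed.

Lemma disc_seg p i j : (i <= j)%N -> disc (seg i j p) = disc (take j p) - disc (take i p).
Proof. by move=> hij; rewrite -(take_cat_seg p hij) disc_cat [RHS]addrC addKr. Qed.

Lemma disc_pump p a b r : disc (pump p a b r) = disc p + r%:Z * disc (seg a b p).
Proof.
by rewrite /pump !disc_cat disc_iter addrCA -disc_cat cat_take_drop addrC.
Qed.

Lemma disc_take_step p i : `|disc (take i.+1 p) - disc (take i p)| <= 1.
Proof.
case: (ltnP i (size p)) => hi; last first.
  by rewrite !take_oversize ?subrr ?normr0 // (leq_trans hi).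
case: p hi => [//|e p] hi; rewrite (take_nth e hi) -cats1 disc_cat addrC addKr.
rewrite /disc big_seq1.
by case: (lbl_in _ != None); case: (lbl_out _ != None).
Qed.

Lemma dmax_prefix p s : (`|disc p| <= dmax (p ++ s))%N.
Proof.
have hp : (size p < (size (p ++ s)).+1)%N by rewrite ltnS size_cat leq_addr.
by have := leq_bigmax (F := fun i : 'I_(size (p ++ s)).+1 => `|disc (take i (p ++ s))|%N)
  (Ordinal hp); rewrite /= take_size_cat.
Qed.

Lemma dmax_attained p : exists2 m, (m <= size p)%N & dmax p = `|disc (take m p)|%N.
Proof.
rewrite /dmax; have [m ->] := bigop.eq_bigmax
  (fun i : 'I_(size p).+1 => `|disc (take i p)|%N) ltac:(by rewrite card_ord).
by exists m; first by rewrite -ltnS.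
Qed.
End Discrepancy.

Section Climb.
Variables (Q : finType) (st : nat -> Q) (g : nat -> int).
Hypotheses (g0 : g 0%N = 0%R) (g_step : forall i, (g i.+1 <= g i + 1)%R).
Local Open Scope ring_scope.

Lemma unit_step_ivt m (j : nat) : j%:Z <= g m -> exists2 i, (i <= m)%N & g i = j.
Proof.
elim: m => [|m IH] hj; first by exists 0%N => //; move: hj; rewrite g0; lia.
have [hjm | hmj] := lerP (j%:Z) (g m).
  by have [i hi gi] := IH hjm; exists i => //; rewrite (leq_trans hi).
by exists m.+1 => //; have := g_step m; lia.
Qed.

Definition hit m j : nat := find (fun i => g i == j%:Z) (iota 0 m.+1).

Lemma hit_spec m j : j%:Z <= g m -> (hit m j <= m)%N /\ g (hit m j) = j.
Proof.
move=> hj; have [i hi gi] := unit_step_ivt hj.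
have hhas : has (fun i => g i == j%:Z) (iota 0 m.+1).
  by apply/hasP; exists i; rewrite ?mem_iota ?gi.
have := nth_find 0%N hhas; rewrite has_find size_iota in hhas.
by rewrite nth_iota // add0n => /eqP.
Qed.

Lemma hit_before m j i : (i < hit m j)%N -> g i != j.
Proof.
move=> hi; have := before_find 0%N hi.
have hsz : (hit m j <= m.+1)%N by rewrite -(size_iota 0 m.+1) find_size.
by rewrite nth_iota ?add0n ?(leq_trans hi hsz) // => ->.
Qed.

Lemma hit_mono m j1 j2 : (j1 < j2)%N -> j2%:Z <= g m -> (hit m j1 < hit m j2)%N.
Proof.
move=> h12 hj2; have [h2m g2] := hit_spec hj2.
have [i hi gi] := @unit_step_ivt (hit m j2) j1 ltac:(rewrite g2; lia).
have [h1m g1] := @hit_spec m j1 ltac:(lia).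
rewrite ltn_neqAle (leq_trans _ hi) ?andbT; last first.
  by rewrite leqNgt; apply/negP => /hit_before; rewrite gi eqxx.
by apply/eqP => e; move: g1; rewrite e g2; lia.
Qed.

(* Pigeonhole on the first visits of the levels 0, ..., #|Q|: if g climbs to
   #|Q|, two positions a < b carry the same state while g strictly increases. *)
Lemma climb_revisits m :
  #|Q|%:Z <= g m -> exists a b, [/\ (a < b <= m)%N, st a = st b & g a < g b].
Proof.
move=> hm; pose F (j : 'I_#|Q|.+1) := st (hit m j).
have : ~~ injectiveb F by apply/injectiveP => /leq_card; rewrite card_ord ltnn.
case/injectivePn => j1 [j2 hne hF].
wlog lt12 : j1 j2 hne hF / (j1 < j2)%N.
  move=> hw; case: (ltngtP j1 j2) => h; first exact: (hw j1 j2).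
    by apply: (hw j2 j1); rewrite // eq_sym.
  by move: hne; rewrite (val_inj h) eqxx.
have hj2 : (j2 : nat)%:Z <= g m by have := ltn_ord j2; lia.
have [h2m g2] := hit_spec hj2; have [_ g1] := @hit_spec m j1 ltac:(lia).
exists (hit m j1), (hit m j2); split => //; last by rewrite g1 g2; lia.
by rewrite h2m hit_mono.
Qed.
End Climb.

Lemma signed_climb (Q : finType) (st : nat -> Q) (f : nat -> int) m :
  f 0%N = 0%R -> (forall i, (`|f i.+1 - f i| <= 1)%R) -> (#|Q|%:Z <= `|f m|)%R ->
  exists a b, [/\ (a < b <= m)%N, st a = st b & (0 < (f b - f a) * f m)%R].
Proof.
move=> f0 f_step hm; have hQ : (0 < #|Q|)%N by apply/card_gt0P; exists (st 0%N).
pose g i := if (0 <= f m)%R then f i else (- f i)%R.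
have g0 : g 0%N = 0%R by rewrite /g f0 oppr0; case: ifP.
have g_step i : (g i.+1 <= g i + 1)%R by have := f_step i; rewrite /g; case: ifP; lia.
have [a [b [hab hst hg]]] :=
  @climb_revisits Q st g g0 g_step m ltac:(rewrite /g; case: ifP; lia).
by exists a, b; split => //; move: hg; rewrite /g; case: ifP => hf hg; nia.
Qed.

Lemma signed_descent (Q : finType) (st : nat -> Q) (f : nat -> int) m N :
  f 0%N = 0%R -> f N = 0%R -> (forall i, (`|f i.+1 - f i| <= 1)%R) ->
  (m <= N)%N -> (#|Q|%:Z <= `|f m|)%R ->
  exists a b, [/\ (m <= a)%N, (a < b <= N)%N, st a = st b & ((f b - f a) * f m < 0)%R].
Proof.
move=> f0 fN f_step hmN hm.
pose rf i := f (N - i)%N.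
have rf0 : rf 0%N = 0%R by rewrite /rf subn0.
have rf_step i : (`|rf i.+1 - rf i| <= 1)%R.
  rewrite /rf distrC; case: (ltnP i N) => hi; first by rewrite -(subnSK hi) f_step.
  have -> : (N - i = 0)%N by lia.
  have -> : (N - i.+1 = 0)%N by lia.
  by rewrite subrr normr0.
have [a [b [/andP [hab hb] hst hf]]] :=
  @signed_climb Q (fun i => st (N - i)%N) rf (N - m)%N rf0 rf_step ltac:(by rewrite /rf subKn).
exists (N - b)%N, (N - a)%N; split => //; [lia | apply/andP; split; lia |].
by move: hf; rewrite /rf subKn //; nia.
Qed.

Section PumpingComputations.
Variables (Q S : finType) (T : transducer Q S).
Local Open Scope ring_scope.

Lemma pump_two_loops q p a1 b1 m a2 b2 r1 r2 :
  walk T q p -> (a1 <= b1 <= m)%N -> (m <= a2 <= b2)%N -> (b2 <= size p)%N ->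
  state_at q p a1 = state_at q p b1 -> state_at q p a2 = state_at q p b2 ->
  exists p', [/\ walk T q p',
    disc p' = disc p + r1%:Z * disc (seg a1 b1 p) + r2%:Z * disc (seg a2 b2 p)
  & exists s, p' = pump (take m p) a1 b1 r1 ++ s].
Proof.
move=> hp /andP [hab1 hb1m] /andP [hma2 hab2] hb2 hst1 hst2.
pose p1 := pump p a2 b2 r2.
have take_p1 j : (j <= b2)%N -> take j p1 = take j p.
  by move=> hj; apply: take_pump; rewrite hj hb2.
have hm : (m <= b2)%N := leq_trans hma2 hab2.
have hb1 : (b1 <= b2)%N := leq_trans hb1m hm.
have seg_p1 : seg a1 b1 p1 = seg a1 b1 p by rewrite /seg take_p1.
exists (pump p1 a1 b1 r1); split.
- apply: walk_pump; [exact: walk_pump | exact: hab1 |].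
  by rewrite /state_at !take_p1 // (leq_trans hab1).
- by rewrite disc_pump seg_p1 disc_pump addrAC.
- by exists (drop m p1); rewrite (pump_take _ _ _ hb1m) take_p1.
Qed.

Lemma zero_excursion_pumps q p m :
  q \in init T -> walk T q p -> disc p = 0 -> (m <= size p)%N ->
  (#|Q| <= `|disc (take m p)|)%N ->
  exists p', [/\ is_computation T p', disc p' = 0 & (`|disc (take m p)| < dmax p')%N].
Proof.
move=> hq hp hp0 hm hQ.
pose f i := disc (take i p).
have f0 : f 0%N = 0 by rewrite /f take0 disc_nil.
have fN : f (size p) = 0 by rewrite /f take_size.
have f_step i : `|f i.+1 - f i| <= 1 by apply: disc_take_step.
have hfm : #|Q|%:Z <= `|f m| by rewrite /f; lia.
have [a1 [b1 [hab1 hst1 hup]]] := signed_climb (state_at q p) f0 f_step hfm.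
have [a2 [b2 [hma2 hab2 hst2 hdown]]] := signed_descent (state_at q p) f0 fN f_step hm hfm.
move: hab1 hab2 => /andP [hab1 hb1m] /andP [hab2 hb2].
have d1 : disc (seg a1 b1 p) = f b1 - f a1 by apply: disc_seg; lia.
have d2 : disc (seg a2 b2 p) = f b2 - f a2 by apply: disc_seg; lia.
have [p' [hw hd [s hs]]] := @pump_two_loops q p a1 b1 m a2 b2 `|f b2 - f a2|%N `|f b1 - f a1|%N
  hp ltac:(lia) ltac:(lia) hb2 hst1 hst2.
exists p'; split.
- exact: walk_computation hq hw.
- by rewrite hd hp0 d1 d2; nia.
- rewrite hs; apply: leq_trans (dmax_prefix _ s).
  rewrite disc_pump seg_take // d1 -/(f m); nia.
Qed.
End PumpingComputations.

Theorem proposition2 (Q S : finType) (T : transducer Q S) (k : nat) :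
  init T != set0 -> 0 < #|Q| ->
  zero_avoiding_min T k -> k < #|Q|.
Proof.
move=> hI _ [avoid_k not_avoid_km1]; rewrite ltnNge; apply/negP => hk.
apply: not_avoid_km1 => p hp hdmax; apply/eqP => hp0.
have [q hq hw] := computation_walk hI hp.
have [m hm hdm] := dmax_attained p.
have [p' [hp' hp'0 hgrow]] := zero_excursion_pumps hq hw hp0 hm ltac:(lia).
by move: (avoid_k p' hp' ltac:(lia)); rewrite hp'0 eqxx.
Qed.
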